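(* Let $\omega\in\mathbb{R}^n$ and let $i\ge 0$ be an index such that $T_{i+1}(\omega)$ is defined. Then $$\frac{1}{T_i(\omega)+T_{i+1}(\omega)}\le\|T_i(\omega)\omega\|_{\mathbb{Z}}\le\frac{1}{T_{i+1}(\omega)^{1/n}}.$$
   Context: For $\omega=(\omega_1,\dots,\omega_n)\in\mathbb{R}^n$, $|\omega|=\max_i|\omega_i|$ and $\|\omega\|_{\mathbb{Z}}=\min_{k\in\mathbb{Z}^n}|\omega-k|$. The periods of $\omega$ are defined by $T_0(\omega)=1$ and $T_{i+1}(\omega)=\min\{T\in\mathbb{N},\,T\ge 1:\|T\omega\|_{\mathbb{Z}}<\|T_i(\omega)\omega\|_{\mathbb{Z}}\}$ (defined whenever this set is nonempty). *)

From HB Require Import structures.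
From mathcomp Require Import all_boot all_order all_algebra.
From mathcomp Require Import reals exp.
Set Implicit Arguments. Unset Strict Implicit. Unset Printing Implicit Defensive.
Import Order.TTheory GRing.Theory Num.Theory.
Local Open Scope ring_scope.

(* distance of a real number to Z: min over k in Z of |x - k|,
   attained at floor x or floor x + 1 *)
Definition distZ (R : realType) (x : R) : R :=
  Num.min (x - (Num.floor x)%:~R) ((Num.floor x + 1)%:~R - x).

(* ||w||_Z = min_{k in Z^n} max_i |w_i - k_i| = max_i dist(w_i, Z) *)
Definition normZ (R : realType) (n : nat) (w : 'I_n -> R) : R :=
  \big[Num.max/0]_(i < n) distZ (w i).

Definition scalev (R : realType) (n : nat) (T : nat) (w : 'I_n -> R) : 'I_n -> R :=
  fun i => T%:R * w i.

(* isPeriod w i T  <->  T_i(w) is defined and equals T.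
   T_0 = 1, T_{i+1} = min { T >= 1 : ||T w||_Z < ||T_i w||_Z }. *)
Inductive isPeriod (R : realType) (n : nat) (w : 'I_n -> R) : nat -> nat -> Prop :=
| isPeriod0 : isPeriod w 0 1
| isPeriodS i Ti T :
    isPeriod w i Ti ->
    (1 <= T)%N ->
    normZ (scalev T w) < normZ (scalev Ti w) ->
    (forall T', (1 <= T')%N -> normZ (scalev T' w) < normZ (scalev Ti w) -> (T <= T')%N) ->
    isPeriod w i.+1 T.

From HB Require Import structures.
From mathcomp Require Import all_boot all_order all_algebra.
From mathcomp Require Import reals exp.
From mathcomp Require Import ring lra zify.
Import Order.TTheory GRing.Theory Num.Theory.
Set Implicit Arguments. Unset Strict Implicit.
Local Open Scope ring_scope.

(* Write T = T_i, T' = T_{i+1} and d = ||T w||, so that ||T' w|| < d <= ||k w|| for 0 < k < T'.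
   Lower bound: let p, p' be nearest integer points of T w and T' w.  If T p'_j <> T' p_j for
   some j, then 1 <= |T p'_j - T' p_j| = |T' (T w_j - p_j) - T (T' w_j - p'_j)| <= (T + T') d.
   Otherwise T (T' w - p') = T' (T w - p), so ||T' w|| >= (T'/T) d >= d, a contradiction.
   Upper bound (Dirichlet): for every M, with L = floor (M d), the T' L^n pairs (k, g),
   0 <= k < T', g in {0..L-1}^n, are sent injectively to (Z/M)^n by floor (M k w) + g,
   since a collision puts (k - k') w within d of Z^n.  Hence T' L^n <= M^n, and M -> oo
   gives T' d^n <= 1. *)

Section DistZ.
Variable R : realType.
Implicit Types (x : R) (c : int).

Lemma intr_nat (k : nat) : (k%:Z)%:~R = k%:R :> R.
Proof. by rewrite pmulrn. Qed.

Lemma distZ_le x c : distZ x <= `|x - c%:~R|.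
Proof.
rewrite /distZ; have /andP[lo hi] := floor_itv x.
have [le_c|lt_c] := leP c (Num.floor x).
  have : c%:~R <= (Num.floor x)%:~R :> R by rewrite ler_int.
  by move=> le_cR; rewrite ge_min ger0_norm; [apply/orP; left; lra | lra].
have : (Num.floor x + 1)%:~R <= c%:~R :> R by rewrite ler_int; lia.
by move=> le_cR; rewrite ge_min ler0_norm; [apply/orP; right; lra | lra].
Qed.

Definition nearestZ x : int :=
  if x - (Num.floor x)%:~R < (Num.floor x + 1)%:~R - x
  then Num.floor x else Num.floor x + 1.

Lemma distZ_nearestZ x : distZ x = `|x - (nearestZ x)%:~R|.
Proof.
have /andP[lo hi] := floor_itv x.
rewrite /distZ /nearestZ /Order.min /=; case: ifP => _.
  by rewrite ger0_norm //; lra.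
by rewrite ler0_norm; lra.
Qed.

Lemma distZ_ge0 x : 0 <= distZ x.
Proof. by rewrite distZ_nearestZ. Qed.

Lemma distZ_le1 x : distZ x <= 1.
Proof.
have /andP[lo hi] := floor_itv x; rewrite intrD in hi.
by apply: le_trans (distZ_le x (Num.floor x)) _; rewrite ger0_norm; lra.
Qed.

Lemma distZ_absz_mulr (m : int) x c :
  distZ (`|m|%N%:R * x) <= `|m%:~R * x - c%:~R|.
Proof.
case: m => k; first by rewrite intr_nat distZ_le.
apply: le_trans (distZ_le _ (- c)) _.
rewrite NegzE abszN absz_nat -normrN mulrNz intrN intr_nat.
by rewrite opprB addrC mulNr.
Qed.

End DistZ.

Section NormZ.
Variables (R : realType) (n : nat).
Implicit Types (w : 'I_n -> R) (c : R).

Lemma distZ_le_normZ w j : distZ (w j) <= normZ w.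
Proof. by rewrite /normZ (bigD1 j) //= le_max lexx. Qed.

Lemma normZ_le w c : 0 <= c -> (forall j, distZ (w j) <= c) -> normZ w <= c.
Proof.
by move=> c0 le_c; rewrite /normZ; elim/big_ind: _ => // x y; rewrite ge_max => ->.
Qed.

Lemma normZ_lt w c : 0 < c -> (forall j, distZ (w j) < c) -> normZ w < c.
Proof.
by move=> c0 lt_c; rewrite /normZ; elim/big_ind: _ => // x y; rewrite gt_max => ->.
Qed.

Lemma normZ_ge0 w : 0 <= normZ w.
Proof.
by rewrite /normZ; elim/big_ind: _ => // [x y x0 _|j _]; rewrite ?le_max ?x0 ?distZ_ge0.
Qed.

Lemma normZ_le1 w : normZ w <= 1.
Proof. by apply: normZ_le => // j; apply: distZ_le1. Qed.

End NormZ.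

Section Periods.
Variables (R : realType) (n : nat) (w : 'I_n -> R).

Lemma isPeriod_uniq i T1 T2 : isPeriod w i T1 -> isPeriod w i T2 -> T1 = T2.
Proof.
move=> h; elim: h T2 => [|i' Ti T _ IH T_gt0 lt_T minT] T2 h2.
  by inversion h2.
inversion h2 as [|? ? ? hTi T2_gt0 lt_T2 minT2]; subst.
have ? := IH _ hTi; subst.
by apply/eqP; rewrite eqn_leq minT // minT2.
Qed.

Lemma isPeriod_gt0 i T : isPeriod w i T -> (0 < T)%N.
Proof. by case. Qed.

Lemma isPeriodS_inv i T T' : isPeriod w i T -> isPeriod w i.+1 T' ->
  normZ (scalev T' w) < normZ (scalev T w) /\
  forall d, (0 < d < T')%N -> normZ (scalev T w) <= normZ (scalev d w).
Proof.
move=> hT hT'; inversion hT' as [|? ? ? hTi _ lt_T' minT']; subst.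
have ? := isPeriod_uniq hT hTi; subst.
split=> // d /andP[d_gt0 lt_dT']; rewrite leNgt; apply/negP => lt_d.
by have := minT' _ d_gt0 lt_d; rewrite leqNgt lt_dT'.
Qed.

Lemma isPeriod_leS i T T' : isPeriod w i T -> isPeriod w i.+1 T' -> (T <= T')%N.
Proof.
case: i => [|i] hT hT'.
  by inversion hT; subst; exact: isPeriod_gt0 hT'.
inversion hT as [|? ? ? hTi _ lt_T minT]; subst.
have [lt_T' _] := isPeriodS_inv hT hT'.
by apply: minT; [exact: isPeriod_gt0 hT' | exact: lt_trans lt_T' lt_T].
Qed.

End Periods.

Section LowerBound.
Variable R : realType.

Lemma inv_addn_le_of_distinct_approximants (T T' : nat) (x d : R) (p p' : int) :
  (0 < T)%N -> T%:Z * p' != T'%:Z * p ->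
  `|T%:R * x - p%:~R| <= d -> `|T'%:R * x - p'%:~R| <= d ->
  (T + T')%:R^-1 <= d.
Proof.
move=> T_gt0 neq_pp' le_d le_d'.
have one_le : 1 <= `|(T%:Z * p' - T'%:Z * p)%:~R : R|.
  by apply: norm_intr_ge1; rewrite ?intr_int // intr_eq0 subr_eq0.
have cross : (T%:Z * p' - T'%:Z * p)%:~R =
    T'%:R * (T%:R * x - p%:~R) - T%:R * (T'%:R * x - p'%:~R) :> R.
  by rewrite intrB !intrM !intr_nat; ring.
rewrite cross in one_le.
rewrite -[X in X <= _]mulr1 ler_pdivrMl ?ltr0n ?addn_gt0 ?T_gt0 //.
apply: le_trans one_le _; apply: le_trans (ler_normB _ _) _.
rewrite natrD mulrDl !normrM !normr_nat addrC.
by apply: lerD; apply: ler_wpM2l.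
Qed.

Lemma distZ_le_proportional (T T' : nat) (x : R) :
  (0 < T <= T')%N -> T%:Z * nearestZ (T'%:R * x) = T'%:Z * nearestZ (T%:R * x) ->
  distZ (T%:R * x) <= distZ (T'%:R * x).
Proof.
move=> /andP[T_gt0 le_TT'] proportional; rewrite !distZ_nearestZ.
set p := nearestZ (T%:R * x) in proportional *.
set p' := nearestZ (T'%:R * x) in proportional *.
have scaled : T%:R * `|T'%:R * x - p'%:~R| = T'%:R * `|T%:R * x - p%:~R| :> R.
  rewrite -{1}[T%:R]normr_nat -{2}[T'%:R]normr_nat -!normrM; congr `|_|.
  have := congr1 (fun z : int => z%:~R : R) proportional; rewrite /= !intrM !intr_nat.
  by rewrite !mulrBr => ->; ring.
have T_gt0R : (0 : R) < T%:R by rewrite ltr0n.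
by rewrite -(ler_pM2l T_gt0R) scaled ler_wpM2r ?ler_nat.
Qed.

Lemma normZ_scalev_lower_bound (n : nat) (w : 'I_n -> R) (T T' : nat) :
  (0 < T <= T')%N -> normZ (scalev T' w) < normZ (scalev T w) ->
  (T + T')%:R^-1 <= normZ (scalev T w).
Proof.
move=> /andP[T_gt0 le_TT'] lt_normZ.
pose approx (k : nat) j := nearestZ (k%:R * w j).
have close (k : nat) j : `|k%:R * w j - (approx k j)%:~R| <= normZ (scalev k w).
  by rewrite -distZ_nearestZ; exact: (distZ_le_normZ (scalev k w) j).
have [j neq_j|proportional] := pickP (fun j => T%:Z * approx T' j != T'%:Z * approx T j).
  apply: (inv_addn_le_of_distinct_approximants T_gt0 neq_j) => //.
  exact: le_trans (close T' j) (ltW lt_normZ).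
exfalso; move: lt_normZ; apply/negP; rewrite -leNgt.
apply: normZ_le => [|j]; first exact: normZ_ge0.
apply: le_trans (distZ_le_normZ (scalev T' w) j).
by apply: distZ_le_proportional; [rewrite T_gt0 | apply/eqP/negbFE/proportional].
Qed.

End LowerBound.

Section Dirichlet.
Variable R : realType.

Lemma floor_shift_gap (A A' : R) (g g' L : nat) : (g < L)%N -> (g' < L)%N ->
  `|A - A' - (Num.floor A + g%:Z - (Num.floor A' + g'%:Z))%:~R| < L%:R.
Proof.
move=> lt_gL lt_g'L.
have /andP[A_lo A_hi] := floor_itv A; have /andP[A'_lo A'_hi] := floor_itv A'.
rewrite intrD in A_hi A'_hi.
have g_ge0 := ler0n R g; have g'_ge0 := ler0n R g'.
have : (g%:R : R) + 1 <= L%:R by rewrite natr1 ler_nat.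
have : (g'%:R : R) + 1 <= L%:R by rewrite natr1 ler_nat.
rewrite intrB !intrD !intr_nat ltr_norml => ? ?.
by apply/andP; split; lra.
Qed.

Lemma inord_modz_eq (m : nat) (x y : int) :
  inord `|(x %% m.+1)%Z|%N = inord `|(y %% m.+1)%Z|%N :> 'I_m.+1 ->
  (x = y %[mod m.+1])%Z.
Proof.
have mod_range z : 0 <= (z %% m.+1)%Z < m.+1 by rewrite modz_ge0 ?ltz_pmod.
have mod_lt z : (`|(z %% m.+1)%Z|%N < m.+1)%N by have := mod_range z; lia.
move/(congr1 val); rewrite /= !inordK ?mod_lt //.
by have := mod_range x; have := mod_range y; lia.
Qed.

Lemma le_invpowR_of_box_counts (n T : nat) (dl : R) :
  (0 < n)%N -> (0 < T)%N -> 0 < dl ->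
  (forall m, (T * (Num.truncn (m.+1%:R * dl)) ^ n <= m.+1 ^ n)%N) ->
  dl <= (powR (T%:R : R) n%:R^-1)^-1.
Proof.
move=> n_gt0 T_gt0 dl_gt0 counts.
set s := powR (T%:R : R) n%:R^-1.
have T_gt0R : (0 : R) < T%:R by rewrite ltr0n.
have s_gt0 : 0 < s by apply: powR_gt0.
have s_expn : s ^+ n = T%:R.
  rewrite -powR_mulrn ?(ltW s_gt0) // /s -powRrM mulVf ?powRr1 ?(ltW T_gt0R) //.
  by rewrite pnatr_eq0 -lt0n.
rewrite -[s^-1]mul1r ler_pdivlMr // leNgt; apply/negP => s_dl_gt1.
set e := dl * s - 1.
have e_gt0 : 0 < e by rewrite /e subr_gt0.
set M := (Num.truncn (s / e)).+1; set L := Num.truncn (M%:R * dl).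
have lt_s_Me : s < M%:R * e by rewrite -ltr_pdivrMr //; apply: truncnS_gt.
have M_gt0 : (0 : R) < M%:R by rewrite ltr0n.
have /andP[_ lt_Mdl_L1] := truncn_itv (mulr_ge0 (ltW M_gt0) (ltW dl_gt0)).
have lt_M_Ls : M%:R < L%:R * s.
  have : (M%:R * dl - 1) * s < L%:R * s by rewrite ltr_pM2r // ltrBlDr natr1.
  apply: le_lt_trans.
  have -> : (M%:R * dl - 1) * s = M%:R + M%:R * e - s by rewrite /e; ring.
  lra.
have : (M%:R : R) ^+ n < (L%:R * s) ^+ n by rewrite ltrXn2r ?ler0n // -lt0n.
by rewrite exprMn s_expn -!natrX -natrM ltr_nat mulnC ltnNge counts.
Qed.

Variables (n : nat) (w : 'I_n -> R).

Lemma box_count_le (T' m : nat) (dl : R) : 0 < dl <= 1 ->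
  (forall d, (0 < d < T')%N -> dl <= normZ (scalev d w)) ->
  (T' * (Num.truncn (m.+1%:R * dl)) ^ n <= m.+1 ^ n)%N.
Proof.
move=> /andP[dl_gt0 dl_le1] far.
set M := m.+1; set L := Num.truncn (M%:R * dl).
have M_gt0 : (0 : R) < M%:R by rewrite ltr0n.
have le_LM : L%:R <= M%:R * dl by rewrite truncn_le mulr_ge0 // ltW.
have le_LMnat : (L <= M)%N.
  by rewrite -(ler_nat R); apply: le_trans le_LM _; rewrite ler_piMr.
pose box (k : nat) (g : {ffun 'I_n -> 'I_L}) j : int :=
  Num.floor (M%:R * (k%:R * w j)) + (g j)%:Z.
pose f (p : 'I_T' * {ffun 'I_n -> 'I_L}) : {ffun 'I_n -> 'I_M} :=
  [ffun j => inord `|(box p.1 p.2 j %% M)%Z|%N].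
suff /leq_card : injective f by rewrite card_prod !card_ffun !card_ord.
move=> [k g] [k' g'] /ffunP /= eq_f.
have box_congr j : (box k g j = box k' g' j %[mod M])%Z.
  by apply: inord_modz_eq; have := eq_f j; rewrite !ffunE.
have [eq_kk'|neq_kk'] := eqVneq k k'.
  subst k'; congr (_, _); apply/ffunP => j; apply: val_inj.
  have /eqP := box_congr j; rewrite /box eqz_modDl !modz_small => [/eqP[]//||];
    by rewrite lez_nat ltz_nat (leq_trans _ le_LMnat).
exfalso.
set d := `|k%:Z - k'%:Z|%N.
have d_range : (0 < d < T')%N.
  rewrite /d; have := ltn_ord k; have := ltn_ord k'.
  by move: neq_kk'; rewrite -val_eqE /=; lia.
have := far d d_range; apply/negP; rewrite -ltNge; apply: normZ_lt => // j.
have /dvdzP[c eq_c] : (M%:Z %| box k g j - box k' g' j)%Z.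
  by rewrite -eqz_mod_dvd; apply/eqP/box_congr.
apply: le_lt_trans (distZ_absz_mulr _ _ c) _.
rewrite -(ltr_pM2l M_gt0) -{1}(normr_nat R M) -normrM; apply: lt_le_trans le_LM.
have := floor_shift_gap (M%:R * (k%:R * w j)) (M%:R * (k'%:R * w j))
  (ltn_ord (g j)) (ltn_ord (g' j)).
move: eq_c; rewrite /box => ->.
suff -> : M%:R * ((k%:Z - k'%:Z)%:~R * w j - c%:~R) =
    M%:R * (k%:R * w j) - M%:R * (k'%:R * w j) - (c * M%:Z)%:~R :> R by [].
by rewrite intrM intrB !intr_nat; ring.
Qed.

Lemma normZ_dirichlet (T : nat) (dl : R) : (0 < T)%N -> dl <= 1 ->
  (forall d, (0 < d < T)%N -> dl <= normZ (scalev d w)) ->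
  dl <= (powR (T%:R : R) n%:R^-1)^-1.
Proof.
move=> T_gt0 dl_le1 far.
have [dl_le0|dl_gt0] := leP dl 0.
  by apply: le_trans dl_le0 _; rewrite invr_ge0 powR_ge0.
have [n0|n_gt0] := posnP n; first by rewrite n0 invr0 powRr0 invr1.
apply: le_invpowR_of_box_counts => // m.
by apply: box_count_le => //; rewrite dl_gt0.
Qed.

End Dirichlet.

Theorem mainTheorem2 (R : realType) (n : nat) (w : 'I_n -> R) (i Ti Ti1 : nat) :
  isPeriod w i Ti -> isPeriod w i.+1 Ti1 ->
  (Ti + Ti1)%:R^-1 <= normZ (scalev Ti w) /\
  normZ (scalev Ti w) <= (powR (Ti1%:R : R) (n%:R^-1))^-1.
Proof.
move=> hTi hTi1.
have [lt_normZ minimal] := isPeriodS_inv hTi hTi1.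
have Ti_range : (0 < Ti <= Ti1)%N.
  by rewrite (isPeriod_gt0 hTi) (isPeriod_leS hTi hTi1).
split; first exact: normZ_scalev_lower_bound.
apply: normZ_dirichlet minimal; [exact: isPeriod_gt0 hTi1 | exact: normZ_le1].
Qed.
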